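(* Let $t$ be a positive integer and $w$ an integer with $\lceil (t+1)/2\rceil\le w\le t$. Then $$ma_t(w)\ge \frac{w}{2t}+\frac{\lfloor (t-1)/2\rfloor}{2t}.$$
   Context: A voter matrix with $t$ topics is a matrix $V\in\{Y,N\}^{n\times t}$ for some positive integer $n$ (rows are voters), subject to the standing assumption that in every column the number of entries $Y$ is at least the number of entries $N$. $\mathcal{V}_t$ is the set of all voter matrices with $t$ topics and any number of voters. A proposal is a vector $p\in\{Y,N\}^t$. A voter $v$ supports $p$ if the Hamming distance between $v$ and $p$ is at most $t/2$; $p$ is supported by $V$ if at least $n/2$ rows of $V$ support $p$. $md_V$ is the maximum number of entries $Y$ of a proposal supported by $V$. $m_V$ denotes the fraction of entries $Y$ among all $nt$ entries of $V$. For an integer $w$ with $\lceil (t+1)/2\rceil\le w\le t$, $ma_t(w)$ is the supremum of $m_V$ over all $V\in\mathcal{V}_t$ with $md_V<w$, with the convention that $ma_t(w)=\frac12$ if no such $V$ exists. *)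

From HB Require Import structures.
From mathcomp Require Import all_boot all_order all_algebra.
From mathcomp Require Import boolp classical_sets reals.
Set Implicit Arguments. Unset Strict Implicit. Unset Printing Implicit Defensive.
Import Order.TTheory GRing.Theory Num.Theory.

(* Entries: true = Y, false = N.  A voter matrix has n rows (voters), t columns
   (topics), n > 0, and in every column #Y >= #N. *)
Definition voter_matrix (n t : nat) (V : 'M[bool]_(n, t)) : Prop :=
  (0 < n)%N /\
  forall j : 'I_t, (#|[pred i : 'I_n | ~~ V i j]| <= #|[pred i : 'I_n | V i j]|)%N.

Definition proposal (t : nat) := {ffun 'I_t -> bool}.

Definition hamming n t (V : 'M[bool]_(n, t)) (i : 'I_n) (p : proposal t) : nat :=
  #|[pred j : 'I_t | V i j != p j]|.

(* voter i supports p iff dist <= t/2, i.e. 2*dist <= t. *)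
Definition supports n t (V : 'M[bool]_(n, t)) (i : 'I_n) (p : proposal t) : bool :=
  (2 * hamming V i p <= t)%N.

(* p supported by V iff at least n/2 voters support p. *)
Definition supported n t (V : 'M[bool]_(n, t)) (p : proposal t) : bool :=
  (n <= 2 * #|[pred i : 'I_n | supports V i p]|)%N.

Definition numY t (p : proposal t) : nat := #|[pred j : 'I_t | p j]|.

(* md_V : maximum number of Y's of a proposal supported by V
   (default 0 if no proposal is supported). *)
Definition md n t (V : 'M[bool]_(n, t)) : nat :=
  (\max_(p : proposal t | supported V p) numY p)%N.

Local Open Scope ring_scope.

Definition mV (R : realType) n t (V : 'M[bool]_(n, t)) : R :=
  (#|[pred ij : 'I_n * 'I_t | V ij.1 ij.2]|)%:R / (n * t)%:R.

Definition ma_set (R : realType) (t w : nat) : set R :=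
  [set x | exists (n : nat) (V : 'M[bool]_(n, t)),
      voter_matrix V /\ (md V < w)%N /\ x = @mV R n t V].

Definition ma (R : realType) (t w : nat) : R :=
  if asbool (exists x, @ma_set R t w x) then sup (@ma_set R t w) else 2^-1.

From HB Require Import structures.
From mathcomp Require Import all_boot all_order all_algebra.
From mathcomp Require Import boolp classical_sets reals.
From mathcomp Require Import zify ring.
Set Implicit Arguments. Unset Strict Implicit. Unset Printing Implicit Defensive.
Import Order.TTheory GRing.Theory Num.Theory.

(* Stack c all-Y voters on top of c+1 voters who each say Y on a
   window of b consecutive topics, the windows sliding so that every topic is
   covered.  Every column then has a Y-majority, and since the all-Y voters are
   a minority, a supported proposal is supported by some window voter, hence
   has at most floor(t/2) + b entries Y.  With b = w - 1 - floor(t/2) this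
   gives md_V < w, while the proportion of Y's tends to (t + b)/(2t) as c grows,
   which is the claimed bound; when b = 0 the bound is 1/2, and m_V >= 1/2 for
   every voter matrix. *)

Lemma card_nat_sum (T : finType) (P : pred T) : #|P| = \sum_x (P x : nat).
Proof.
rewrite -sum1_card big_mkcond /=; apply: eq_bigr => x _.
by rewrite unfold_in; case: (P x).
Qed.

Lemma card_split_ord m n (P : pred 'I_(m + n)) :
  #|P| = #|[pred i | P (lshift n i)]| + #|[pred i | P (rshift m i)]|.
Proof. by rewrite !card_nat_sum big_split_ord. Qed.

Lemma card_window t s e :
  #|[pred j : 'I_t | s <= j < e]| = minn t e - s.
Proof.
rewrite card_nat_sum /=; elim: t => [|t IH]; first by rewrite big_ord0 min0n.
by rewrite big_ord_recr /= IH; case: (leqP s t); case: (ltnP t e) => /=; lia.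
Qed.

Section VoterMatrix.

Variables (n t : nat) (V : 'M[bool]_(n, t)).

Definition cardY := #|[pred ij : 'I_n * 'I_t | V ij.1 ij.2]|.

Lemma cardY_sum_rows : cardY = \sum_i #|[pred j | V i j]|.
Proof.
rewrite /cardY card_nat_sum (eq_bigr _ (fun i _ => card_nat_sum _)) pair_big.
by apply: eq_bigr => -[i j].
Qed.

Lemma cardY_sum_cols : cardY = \sum_j #|[pred i | V i j]|.
Proof.
rewrite cardY_sum_rows (eq_bigr _ (fun i _ => card_nat_sum _)) exchange_big /=.
by apply: eq_bigr => j _; rewrite card_nat_sum.
Qed.

Lemma cardY_le : cardY <= n * t.
Proof. by apply: leq_trans (max_card _) _; rewrite card_prod !card_ord. Qed.

Lemma voter_matrixE :
  voter_matrix V <-> 0 < n /\ forall j, n <= 2 * #|[pred i | V i j]|.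
Proof.
have cardNY j : #|[pred i | ~~ V i j]| + #|[pred i | V i j]| = n.
  by rewrite addnC -[RHS]card_ord -(cardC [pred i | V i j]).
by split=> -[n_gt0 col]; split=> // j; have := col j; have := cardNY j; lia.
Qed.

Lemma cardY_ge : voter_matrix V -> n * t <= 2 * cardY.
Proof.
move=> /voter_matrixE[_ col]; rewrite cardY_sum_cols big_distrr /=.
have -> : n * t = \sum_(j < t) n by rewrite sum_nat_const card_ord mulnC.
exact: leq_sum.
Qed.

Lemma numY_le_supporter i (p : proposal t) :
  supports V i p -> numY p <= t./2 + #|[pred j | V i j]|.
Proof.
rewrite /supports => sup_ip.
have : numY p <= hamming V i p + #|[pred j | V i j]|.
  rewrite /numY /hamming -cardUI.
  apply: leq_trans (leq_addr _ _); apply/subset_leq_card/fintype.subsetP => j.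
  by rewrite !inE; case: (p j) (V i j) => -[].
lia.
Qed.

Lemma md_leq m : (forall p, supported V p -> numY p <= m) -> md V <= m.
Proof. by move=> numY_le; apply/bigmax_leqP. Qed.

End VoterMatrix.

Local Open Scope ring_scope.

Lemma ler_of_cofinal_add_divn (R : archiRealFieldType) (x y a : R) :
  (forall m, exists2 n : nat, (m <= n)%N & x <= y + a / n%:R) -> x <= y.
Proof.
move=> cofinal; apply/ler_addgt0Pr => e e_gt0.
have [a_le0 | a_gt0] := lerP a 0.
  have [n _ xle] := cofinal 0%N; apply: (le_trans xle); rewrite lerD2l.
  by apply: le_trans (ltW e_gt0); rewrite mulr_le0_ge0 // invr_ge0.
have ae_ge0 : 0 <= a / e by rewrite divr_ge0 ?ltW.
have [n bn xle] := cofinal (Num.bound (a / e)).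
have ae_lt_n : a / e < n%:R.
  by apply: lt_le_trans (archi_boundP ae_ge0) _; rewrite ler_nat.
have n_gt0 : 0 < n%:R :> R := le_lt_trans ae_ge0 ae_lt_n.
apply: (le_trans xle); rewrite lerD2l ler_pdivrMr //.
by rewrite ltr_pdivrMr // in ae_lt_n; rewrite mulrC ltW.
Qed.

Section VoterProportion.

Variables (R : realType) (n t : nat) (V : 'M[bool]_(n, t)).
Hypotheses (t_gt0 : (0 < t)%N) (V_voter : voter_matrix V).

Let nt_gt0 : 0 < (n * t)%:R :> R.
Proof. by rewrite ltr0n muln_gt0 t_gt0 andbT; case: V_voter. Qed.

Lemma mV_ge_half : 2^-1 <= mV R V.
Proof.
rewrite /mV -/(cardY V) ler_pdivlMr // mulrC ler_pdivrMr ?ltr0n // -natrM ler_nat.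
by rewrite [X in (_ <= X)%N]mulnC; exact: cardY_ge.
Qed.

Lemma mV_le1 : mV R V <= 1.
Proof. by rewrite /mV ler_pdivrMr // mul1r ler_nat cardY_le. Qed.

End VoterProportion.

Section Ma.

Variables (R : realType) (t w : nat).
Hypothesis t_gt0 : (0 < t)%N.

Lemma has_ubound_ma_set : has_ubound (@ma_set R t w).
Proof. by exists 1 => _ [n [V [V_voter [_ ->]]]]; exact: mV_le1. Qed.

Lemma ma_ge_half : 2^-1 <= @ma R t w.
Proof.
rewrite /ma; case: asboolP => [[x Sx] | //].
apply: le_trans (ub_le_sup has_ubound_ma_set Sx).
by case: Sx => n [V [V_voter [_ ->]]]; exact: mV_ge_half.
Qed.

Lemma mV_le_ma n (V : 'M[bool]_(n, t)) :
  voter_matrix V -> (md V < w)%N -> mV R V <= @ma R t w.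
Proof.
move=> V_voter md_lt; have SV : @ma_set R t w (mV R V) by exists n, V.
by rewrite /ma asboolT; [exact: ub_le_sup has_ubound_ma_set _ SV | exists (mV R V)].
Qed.

End Ma.

Section Staircase.

Variables t b : nat.
Hypothesis b_le_t : (b <= t)%N.

(* Row r says Y on the b topics starting at min(r, t - b): the windows stay
   inside the t topics, and rows 0, ..., t - b together cover every topic. *)
Definition sliding_window_mx m : 'M[bool]_(m, t) :=
  \matrix_(r, j) let s := minn r (t - b) in (s <= j < s + b)%N.

Lemma sliding_window_row m (r : 'I_m) :
  #|[pred j | sliding_window_mx m r j]| = b.
Proof.
rewrite -[RHS](_ : minn t (minn r (t - b) + b) - minn r (t - b) = b)%N; last by lia.
by rewrite -card_window; apply: eq_card => j; rewrite !inE mxE.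
Qed.

Lemma sliding_window_col_gt0 m (j : 'I_t) :
  (0 < b)%N -> (t <= m)%N -> (0 < #|[pred r | sliding_window_mx m r j]|)%N.
Proof.
move=> b_gt0 t_le_m; have r_lt_m : (minn j (t - b) < m)%N by have := ltn_ord j; lia.
apply/card_gt0P; exists (Ordinal r_lt_m); rewrite inE mxE /=.
by have := ltn_ord j; lia.
Qed.

Definition staircase c : 'M[bool]_(c + c.+1, t) :=
  col_mx (const_mx true) (sliding_window_mx c.+1).

Lemma staircase_row_full c i : #|[pred j | staircase c (lshift c.+1 i) j]| = t.
Proof. by rewrite -[RHS]card_ord; apply: eq_card => j; rewrite !inE col_mxEu mxE. Qed.

Lemma staircase_row_window c r : #|[pred j | staircase c (rshift c r) j]| = b.
Proof. by rewrite -(sliding_window_row r); apply: eq_card => j; rewrite !inE col_mxEd. Qed.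

Lemma cardY_staircase c : cardY (staircase c) = (c * t + c.+1 * b)%N.
Proof.
rewrite cardY_sum_rows big_split_ord /=.
rewrite (eq_bigr _ (fun i _ => staircase_row_full i)).
rewrite (eq_bigr _ (fun r _ => staircase_row_window r)).
by rewrite !sum_nat_const !card_ord.
Qed.

Lemma staircase_voter c :
  (0 < b)%N -> (t <= c.+1)%N -> voter_matrix (staircase c).
Proof.
move=> b_gt0 t_le_c1; apply/voter_matrixE; split=> [|j]; first by rewrite addnS.
rewrite card_split_ord.
have -> : #|[pred i | staircase c (lshift c.+1 i) j]| = c.
  by rewrite -[RHS]card_ord; apply: eq_card => i; rewrite !inE col_mxEu mxE.
have -> : #|[pred r | staircase c (rshift c r) j]| =
          #|[pred r | sliding_window_mx c.+1 r j]|.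
  by apply: eq_card => r; rewrite !inE col_mxEd.
by have := sliding_window_col_gt0 j b_gt0 t_le_c1; lia.
Qed.

Lemma md_staircase c : (md (staircase c) <= t./2 + b)%N.
Proof.
apply: md_leq => p; rewrite /supported card_split_ord /= => p_supp.
have rich_le : (#|[pred i | supports (staircase c) (lshift c.+1 i) p]| <= c)%N.
  by apply: leq_trans (max_card _) _; rewrite card_ord.
have /card_gt0P[r] :
    (0 < #|[pred r | supports (staircase c) (rshift c r) p]|)%N by lia.
by rewrite inE => /numY_le_supporter; rewrite staircase_row_window.
Qed.

Lemma staircase_mV_approx (R : realType) c : (0 < t)%N ->
  (t + b)%:R / (2 * t)%:R <= mV R (staircase c) + 2^-1 / (c + c.+1)%:R.
Proof.
move=> t_gt0; rewrite /mV -/(cardY _) cardY_staircase.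
set n := (c + c.+1)%N; have n_gt0 : (0 < n)%N by rewrite /n addnS.
have cross_mul_le : ((t + b) * n <= 2 * (c * t + c.+1 * b) + t)%N.
  by rewrite /n; nia.
have -> : (t + b)%:R / (2 * t)%:R = ((t + b) * n)%:R / (2 * t * n)%:R :> R.
  by rewrite !natrM; field; rewrite !pnatr_eq0 -!lt0n n_gt0 t_gt0.
have -> : (c * t + c.+1 * b)%:R / (n * t)%:R + 2^-1 / n%:R =
          (2 * (c * t + c.+1 * b) + t)%:R / (2 * t * n)%:R :> R.
  by rewrite natrD !natrM; field; rewrite !pnatr_eq0 -!lt0n n_gt0 t_gt0.
by rewrite ler_pM2r ?invr_gt0 ?ltr0n ?muln_gt0 ?n_gt0 ?t_gt0 // ler_nat.
Qed.

End Staircase.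

Theorem lemma5p9 (R : realType) (t w : nat) :
  (0 < t)%N -> ((t.+2)./2 <= w)%N -> (w <= t)%N ->
  w%:R / (2 * t)%:R + ((t.-1)./2)%:R / (2 * t)%:R <= @ma R t w.
Proof.
move=> t_gt0 w_ge w_le.
set b := (w - (t./2).+1)%N.
have -> : w%:R / (2 * t)%:R + ((t.-1)./2)%:R / (2 * t)%:R =
          (t + b)%:R / (2 * t)%:R :> R.
  by rewrite -mulrDl -natrD; congr (_%:R / _); lia.
have [b0 | b_gt0] := posnP b.
  rewrite b0 addn0 natrM invfM mulrCA divff ?mulr1 ?pnatr_eq0 -?lt0n //.
  exact: ma_ge_half.
have b_le_t : (b <= t)%N by lia.
apply: (@ler_of_cofinal_add_divn _ _ _ 2^-1) => m; set c := maxn m t.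
exists (c + c.+1)%N; first by lia.
apply: le_trans (staircase_mV_approx b_le_t R c t_gt0) _; rewrite lerD2r.
apply: mV_le_ma => //; first by apply: staircase_voter => //; lia.
by apply: leq_ltn_trans (md_staircase b_le_t c) _; lia.
Qed.
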